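(* Let $\Sigma\in\mathbb{R}^{p\times p}$ with $\Sigma\succ0$, $\theta_0\in\mathbb{R}^p$, $S=\mathrm{supp}(\theta_0)$, $\xi>0$, and let $\widehat\theta^\infty$ be the unique minimizer of $\theta\mapsto\frac12\langle\theta-\theta_0,\Sigma(\theta-\theta_0)\rangle+\xi\|\theta\|_1$. Let $T\supseteq S$ and $v\in\{+1,0,-1\}^p$ with $\mathrm{supp}(v)=T$. Then $\mathrm{sign}(\widehat\theta^\infty)=v$ if and only if $$\|\Sigma_{T^c,T}\Sigma_{T,T}^{-1}v_T\|_\infty\le1\quad\text{and}\quad v_T=\mathrm{sign}\big(\theta_{0,T}-\xi\Sigma_{T,T}^{-1}v_T\big).$$ Further, if these hold, $\widehat\theta^\infty_{T^c}=0$ and $\widehat\theta^\infty_T=\theta_{0,T}-\xi\Sigma_{T,T}^{-1}v_T$.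
   Context: $\mathrm{sign}(u)_i=+1,0,-1$ according as $u_i>0,=0,<0$; $A_{I,J}$ submatrix with rows in $I$, columns in $J$; $A_{T,T}^{-1}=(A_{T,T})^{-1}$; $v_T$ restriction to $T$; $T^c=[p]\setminus T$. *)

From HB Require Import structures.
From mathcomp Require Import all_boot all_order all_algebra.
Set Implicit Arguments. Unset Strict Implicit. Unset Printing Implicit Defensive.
Import Order.TTheory GRing.Theory Num.Theory.
Local Open Scope ring_scope.

(* Vectors in R^p are column vectors 'cV[R]_p; index sets are T : {set 'I_p}.
   Sub-vectors / sub-matrices are indexed by 'I_#|T| through enum_val
   (i.e. the elements of T in increasing order). *)

Section Defs.
Variable R : realFieldType.
Variable p : nat.

Definition posdef (A : 'M[R]_p) : Prop :=
  A^T = A /\ forall x : 'cV[R]_p, x != 0 -> 0 < (x^T *m A *m x) 0 0.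

Definition supp (u : 'cV[R]_p) : {set 'I_p} := [set i | u i 0 != 0].

Definition sign (u : 'cV[R]_p) : 'cV[R]_p := map_mx (fun x => Num.sg x) u.

Definition norm1 (u : 'cV[R]_p) : R := \sum_i `|u i 0|.

Definition subvec (T : {set 'I_p}) (u : 'cV[R]_p) : 'cV[R]_#|T| :=
  \col_(i < #|T|) u (enum_val i) 0.

Definition subM (I J : {set 'I_p}) (A : 'M[R]_p) : 'M[R]_(#|I|, #|J|) :=
  \matrix_(i < #|I|, j < #|J|) A (enum_val i) (enum_val j).

Definition supnorm_le (n : nat) (w : 'cV[R]_n) (c : R) : Prop :=
  forall i, `|w i 0| <= c.

Definition lasso_obj (Sigma : 'M[R]_p) (theta0 : 'cV[R]_p) (xi : R)
  (theta : 'cV[R]_p) : R :=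
  2^-1 * ((theta - theta0)^T *m Sigma *m (theta - theta0)) 0 0
  + xi * norm1 theta.

Definition is_minimizer (f : 'cV[R]_p -> R) (x : 'cV[R]_p) : Prop :=
  forall y, f x <= f y.

End Defs.

From HB Require Import structures.
From mathcomp Require Import all_boot all_order all_algebra.
From mathcomp Require Import ring lra.
Set Implicit Arguments. Unset Strict Implicit. Unset Printing Implicit Defensive.
Import Order.TTheory GRing.Theory Num.Theory.
Local Open Scope ring_scope.

(* The objective is strictly convex, so its minimizer is characterized by the
   KKT conditions: the gradient g = Sigma (theta - theta0) satisfies
   g_i = -xi sign(theta_i) where theta_i <> 0 and |g_i| <= xi where theta_i = 0.
   If sign(theta) = v, then theta vanishes off T (as does theta0), so
   g_T = Sigma_TT (theta_T - theta0_T) and g_Tc = Sigma_TcT (theta_T - theta0_T);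
   the conditions on T solve to theta_T = theta0_T - xi Sigma_TT^-1 v_T, and
   those off T become the sup-norm bound.  Conversely, when the two conditions
   hold, the vector with this restriction to T and zeros elsewhere satisfies
   KKT, hence is the minimizer. *)

Section Scalar.
Variable R : realFieldType.

Lemma ge0_of_quad_ge0_near0 (A B : R) : 0 <= B ->
  (forall t, 0 < t -> t <= 1 -> 0 <= t * A + t ^+ 2 * B) -> 0 <= A.
Proof.
move=> B0 H; rewrite leNgt; apply/negP => A0.
have BA : 0 < B - A by lra.
pose t := - A / (B - A).
have t0 : 0 < t by rewrite /t divr_gt0 // oppr_gt0.
have t1 : t <= 1 by rewrite /t ler_pdivrMr // mul1r; lra.
have E : (A + t * B) * (B - A) = - A ^+ 2.
  by rewrite /t; field; rewrite subr_eq0; apply/eqP => E; lra.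
have := H t t0 t1.
have -> : t * A + t ^+ 2 * B = t * (A + t * B) by ring.
rewrite pmulr_rge0 // => H2.
have : 0 <= (A + t * B) * (B - A) by rewrite mulr_ge0 // ltW.
rewrite E; nra.
Qed.

(* Optimality of [a] for [c |-> c * g + xi |a + c|]: [-g] is a subgradient of
   [xi |.|] at [a]. *)
Lemma abs_subgradientP (xi g a : R) : 0 < xi ->
  (forall c, 0 <= c * g + xi * (`|a + c| - `|a|)) <->
  (a != 0 -> g = - xi * Num.sg a) /\ (a = 0 -> `|g| <= xi).
Proof.
move=> xi0; split=> [H | [H1 H2] c].
  split=> [a0 | a0].
    have := H (- a); have := H a; rewrite subrr normr0.
    have [an|ap|a0'] := ltrgtP a 0; last by rewrite a0' eqxx in a0.
      have aa : a + a < 0 by lra.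
      by rewrite ltr0_sg // (ltr0_norm an) (ltr0_norm aa); nra.
    have aa : 0 < a + a by lra.
    by rewrite gtr0_sg // (gtr0_norm ap) (gtr0_norm aa); nra.
  have := H 1; have := H (-1).
  by rewrite a0 !add0r normr0 normrN normr1 ler_norml => ? ?; lra.
have [an|ap|a0] := ltrgtP a 0.
- rewrite (H1 (ltr0_neq0 an)) ltr0_sg // [`|a|]ltr0_norm //.
  have : - (a + c) <= `|a + c| by rewrite -normrN ler_norm.
  nra.
- rewrite (H1 (lt0r_neq0 ap)) gtr0_sg // [`|a|]gtr0_norm //.
  by have := ler_norm (a + c); nra.
- move: (H2 a0); rewrite a0 add0r normr0 subr0 => hg.
  have : - (c * g) <= `|c| * `|g| by rewrite -normrM -normrN ler_norm.
  have : `|c| * `|g| <= `|c| * xi by rewrite ler_wpM2l.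
  nra.
Qed.

Lemma supnorm_le_scale n (x : 'cV[R]_n) (a c : R) : 0 < a ->
  supnorm_le (a *: x) (a * c) <-> supnorm_le x c.
Proof.
move=> a0; split=> H i; have := H i; rewrite mxE normrM gtr0_norm //.
  by rewrite ler_pM2l.
by move=> ?; rewrite ler_pM2l.
Qed.

Lemma supnorm_leN n (x : 'cV[R]_n) (c : R) :
  supnorm_le (- x) c <-> supnorm_le x c.
Proof. by split=> H i; have := H i; rewrite mxE normrN. Qed.

End Scalar.

Section Lasso.
Variables (R : realFieldType) (p : nat).
Variables (Sigma : 'M[R]_p) (theta0 : 'cV[R]_p) (xi : R).
Hypothesis Spd : posdef Sigma.
Hypothesis xi_gt0 : 0 < xi.

Definition qform (x y : 'cV[R]_p) : R := (x^T *m Sigma *m y) 0 0.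

Definition lasso_grad (th : 'cV[R]_p) : 'cV[R]_p := Sigma *m (th - theta0).

Definition lasso_VI (th : 'cV[R]_p) : Prop := forall y,
  0 <= qform (y - th) (th - theta0) + xi * (norm1 y - norm1 th).

Definition lasso_KKT (th : 'cV[R]_p) : Prop := forall i,
  (th i 0 != 0 -> lasso_grad th i 0 = - xi * Num.sg (th i 0)) /\
  (th i 0 = 0 -> `|lasso_grad th i 0| <= xi).

Lemma qformE x y : qform x y = \sum_i x i 0 * (Sigma *m y) i 0.
Proof. by rewrite /qform -mulmxA mxE; apply: eq_bigr => i _; rewrite mxE. Qed.

Lemma qformC x y : qform x y = qform y x.
Proof.
have -> : qform x y = (x^T *m Sigma *m y)^T 0 0 by rewrite mxE.
by rewrite !trmx_mul trmxK mulmxA (proj1 Spd).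
Qed.

Lemma qformDl x y z : qform (x + y) z = qform x z + qform y z.
Proof. by rewrite !qformE -big_split; apply: eq_bigr => i _; rewrite mxE mulrDl. Qed.

Lemma qformZl t x z : qform (t *: x) z = t * qform x z.
Proof. by rewrite !qformE mulr_sumr; apply: eq_bigr => i _; rewrite mxE mulrA. Qed.

Lemma qformDr x y z : qform z (x + y) = qform z x + qform z y.
Proof. by rewrite qformC qformDl !(qformC z). Qed.

Lemma qformZr t x z : qform z (t *: x) = t * qform z x.
Proof. by rewrite qformC qformZl (qformC z). Qed.

Lemma qform_ge0 x : 0 <= qform x x.
Proof.
have [->|x0] := eqVneq x 0; last exact: ltW (proj2 Spd x x0).
by rewrite qformE big1 // => i _; rewrite mxE mul0r.
Qed.

Local Notation f := (lasso_obj Sigma theta0 xi).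

Lemma lasso_obj_expand th y : f y = f th + qform (y - th) (th - theta0)
  + 2^-1 * qform (y - th) (y - th) + xi * (norm1 y - norm1 th).
Proof.
rewrite /lasso_obj -!/(qform _ _).
have -> : y - theta0 = (y - th) + (th - theta0) by rewrite addrA subrK.
rewrite (qformDl (y - th)) !(qformDr (y - th)) (qformC (th - theta0) (y - th)).
by field.
Qed.

Lemma norm1_convex (th y : 'cV[R]_p) (t : R) : 0 <= t -> t <= 1 ->
  norm1 (th + t *: (y - th)) <= (1 - t) * norm1 th + t * norm1 y.
Proof.
move=> t0 t1; rewrite /norm1 !mulr_sumr -big_split /=.
apply: ler_sum => i _; rewrite !mxE.
have -> : th i 0 + t * (y i 0 - th i 0) = (1 - t) * th i 0 + t * y i 0 by ring.
apply: le_trans (ler_normD _ _) _.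
by rewrite !normrM (ger0_norm t0) ger0_norm ?subr_ge0.
Qed.

(* Compare [th] with [th + t (y - th)] and let [t] tend to 0. *)
Lemma minimizer_lasso_VI th : is_minimizer f th -> lasso_VI th.
Proof.
move=> Hm y.
apply: (@ge0_of_quad_ge0_near0 _ _ (2^-1 * qform (y - th) (y - th))).
  by rewrite mulr_ge0 ?qform_ge0 // invr_ge0.
move=> t t0 t1.
have := Hm (th + t *: (y - th)).
rewrite (lasso_obj_expand th (th + _)).
have -> : th + t *: (y - th) - th = t *: (y - th) by rewrite addrC addKr.
rewrite !qformZl !qformZr.
have : xi * (norm1 (th + t *: (y - th)) - norm1 th) <=
       xi * (t * (norm1 y - norm1 th)).
  by rewrite ler_pM2l //; have := norm1_convex th y (ltW t0) t1; lra.
set a := qform _ (th - theta0); set b := qform (y - th) _.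
have -> : t * (a + xi * (norm1 y - norm1 th)) + t ^+ 2 * (2^-1 * b) =
          t * a + 2^-1 * (t * (t * b)) + xi * (t * (norm1 y - norm1 th)) by ring.
lra.
Qed.

Lemma lasso_VI_eq th y : lasso_VI th -> f y <= f th -> y = th.
Proof.
move=> H; have := H y; rewrite (lasso_obj_expand th y) => H1 Hf.
have Hq : qform (y - th) (y - th) <= 0 by lra.
apply/eqP; rewrite -subr_eq0; apply/negP => /negP d0.
by have := proj2 Spd _ d0; rewrite -/(qform _ _); lra.
Qed.

Lemma lasso_VI_sum th y :
  qform (y - th) (th - theta0) + xi * (norm1 y - norm1 th) =
  \sum_i ((y i 0 - th i 0) * lasso_grad th i 0
          + xi * (`|th i 0 + (y i 0 - th i 0)| - `|th i 0|)).
Proof.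
rewrite qformE /norm1 -sumrB mulr_sumr -big_split /=.
by apply: eq_bigr => i _; rewrite !mxE (addrC (th i 0)) subrK.
Qed.

(* The l1 term is separable, so the variational inequality splits into
   one scalar subgradient condition per coordinate. *)
Lemma lasso_VI_KKT th : lasso_VI th <-> lasso_KKT th.
Proof.
split=> H.
  move=> i; apply/abs_subgradientP => // c.
  pose y := \col_j (if j == i then th j 0 + c else th j 0).
  have := H y; rewrite lasso_VI_sum (bigD1 i) //= big1 ?addr0.
    by rewrite !mxE eqxx addrAC subrr add0r.
  by move=> j /negbTE ji; rewrite !mxE ji subrr mul0r addr0 subrr mulr0 addr0.
move=> y; rewrite lasso_VI_sum; apply: sumr_ge0 => i _.
by have := H i; move/(@abs_subgradientP _ _ _ _ xi_gt0); apply.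
Qed.

Lemma lasso_minimizer_KKT th : is_minimizer f th -> lasso_KKT th.
Proof. by move/minimizer_lasso_VI/lasso_VI_KKT. Qed.

Lemma lasso_KKT_minimizer_eq th y : lasso_KKT th -> is_minimizer f y -> y = th.
Proof. by move/lasso_VI_KKT/lasso_VI_eq => H Hy; apply/H/Hy. Qed.

End Lasso.

Section Restriction.
Variables (R : realFieldType) (p : nat).
Implicit Types (T U : {set 'I_p}) (x : 'cV[R]_p).

Lemma notin_supp_eq0 T x i : supp x \subset T -> i \notin T -> x i 0 = 0.
Proof.
move=> sxT iT; apply/eqP; apply: contraNT iT => xi0.
by apply: (subsetP sxT); rewrite inE.
Qed.

Lemma in_enum_val T i : i \in T -> exists k : 'I_#|T|, i = enum_val k.
Proof. by move=> iT; exists (enum_rank_in iT i); rewrite enum_rankK_in. Qed.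

Lemma notin_enum_valC T (k : 'I_#|~: T|) : enum_val k \notin T.
Proof. by have := enum_valP k; rewrite inE. Qed.

Lemma big_enum_val_supp T (F : 'I_p -> R) : (forall i, i \notin T -> F i = 0) ->
  \sum_i F i = \sum_(k < #|T|) F (enum_val k).
Proof.
move=> F0; rewrite (bigID (mem T)) /= [X in _ + X]big1 ?addr0.
  exact: big_enum_val.
by move=> i /F0.
Qed.

Lemma subvec_mulmx T U (S : 'M[R]_p) x : supp x \subset T ->
  subvec U (S *m x) = subM U T S *m subvec T x.
Proof.
move=> sxT; apply/matrixP => k j; rewrite (ord1 j) !mxE (@big_enum_val_supp T).
  by apply: eq_bigr => l _; rewrite !mxE.
by move=> i /(notin_supp_eq0 sxT) ->; rewrite mulr0.
Qed.

Lemma subvecE T x k : subvec T x k 0 = x (enum_val k) 0.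
Proof. exact: mxE. Qed.

Lemma subvecB T x y : subvec T (x - y) = subvec T x - subvec T y.
Proof. by apply/matrixP => k j; rewrite !mxE. Qed.

Lemma subvec_sign T x : subvec T (sign x) = sign (subvec T x).
Proof. by apply/matrixP => k j; rewrite !mxE. Qed.

(* Extension by zero of a vector indexed by the elements of [T]. *)
Definition extvec T (w : 'cV[R]_#|T|) : 'cV[R]_p :=
  \col_i (if [pick k : 'I_#|T| | enum_val k == i] is Some k then w k 0 else 0).

Lemma extvec_enum_val T (w : 'cV[R]_#|T|) k : extvec w (enum_val k) 0 = w k 0.
Proof.
rewrite mxE; case: pickP => [k' /eqP /enum_val_inj -> // | /(_ k)].
by rewrite eqxx.
Qed.

Lemma extvec_out T (w : 'cV[R]_#|T|) i : i \notin T -> extvec w i 0 = 0.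
Proof.
move=> iT; rewrite mxE; case: pickP => [k /eqP ki | //].
by move: iT; rewrite -ki enum_valP.
Qed.

Lemma supp_extvec T (w : 'cV[R]_#|T|) : supp (extvec w) \subset T.
Proof.
apply/subsetP => i; rewrite inE; apply: contraR => iT.
by rewrite extvec_out.
Qed.

Lemma subvec_extvec T (w : 'cV[R]_#|T|) : subvec T (extvec w) = w.
Proof. by apply/matrixP => k j; rewrite (ord1 j) mxE extvec_enum_val. Qed.

Lemma subvecC_extvec T (w : 'cV[R]_#|T|) : subvec (~: T) (extvec w) = 0.
Proof.
by apply/matrixP => k j; rewrite [LHS]mxE extvec_out ?notin_enum_valC ?mxE.
Qed.

(* A principal submatrix of a positive definite matrix is positive definite,
   hence invertible: a kernel vector extended by zero would be isotropic. *)
Lemma subM_unitmx (Sigma : 'M[R]_p) T : posdef Sigma -> subM T T Sigma \in unitmx.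
Proof.
move=> Spd; rewrite unitmxE unitfE; apply/negP => /det0P [w w0 wS].
have STT_sym : (subM T T Sigma)^T = subM T T Sigma.
  by apply/matrixP => i j; rewrite !mxE -[Sigma in RHS](proj1 Spd) mxE.
have Sw : subM T T Sigma *m w^T = 0 by rewrite -STT_sym -trmx_mul wS trmx0.
pose z := extvec w^T.
have z0 : z != 0.
  apply: contraNneq w0 => ez; rewrite -[w]trmxK -(subvec_extvec w^T) -/z ez.
  by apply/eqP/matrixP => i j; rewrite !mxE.
have := proj2 Spd z z0; rewrite -/(qform Sigma z z) qformE.
rewrite (@big_enum_val_supp T); last by move=> i iT; rewrite extvec_out ?mul0r.
rewrite big1 ?ltxx // => k _.
have := subvec_mulmx T Sigma (supp_extvec w^T).
by rewrite subvec_extvec Sw => /matrixP/(_ k 0); rewrite !mxE => ->; rewrite mulr0.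
Qed.

End Restriction.

Section SignedSupport.
Variables (R : realFieldType) (p : nat).
Variables (Sigma : 'M[R]_p) (theta0 : 'cV[R]_p) (xi : R) (T : {set 'I_p}) (v : 'cV[R]_p).
Hypothesis xi_gt0 : 0 < xi.
Hypothesis supp_theta0 : supp theta0 \subset T.
Hypothesis supp_v : supp v = T.

Local Notation vT := (subvec T v).
Local Notation grad := (lasso_grad Sigma theta0).

Lemma supp_of_sign th : sign th = v -> supp th = T.
Proof. by move=> Hs; apply/setP => i; rewrite -supp_v !inE -Hs mxE sgr_eq0. Qed.

Lemma subvec_lasso_grad U th : supp th \subset T ->
  subvec U (grad th) = subM U T Sigma *m (subvec T th - subvec T theta0).
Proof.
move=> sthT; rewrite /lasso_grad (@subvec_mulmx _ _ T U) ?subvecB //.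
apply/subsetP => i; rewrite inE !mxE; apply: contraR => iT.
by rewrite !(notin_supp_eq0 _ iT) ?subr0.
Qed.

Lemma lasso_KKT_signE th : sign th = v ->
  lasso_KKT Sigma theta0 xi th <->
  subvec T (grad th) = - (xi *: vT) /\ supnorm_le (subvec (~: T) (grad th)) xi.
Proof.
move=> Hs; have sg_th i : Num.sg (th i 0) = v i 0 by rewrite -Hs mxE.
have th0 i : (th i 0 != 0) = (i \in T) by rewrite -(supp_of_sign Hs) inE.
split=> [K | [GT GC] i].
  split=> [|k]; last first.
    rewrite subvecE; apply: (proj2 (K _)); apply/eqP.
    by rewrite -[_ == _]negbK th0 notin_enum_valC.
  apply/matrixP => k j; rewrite (ord1 j) subvecE (proj1 (K _)) ?th0 ?enum_valP //.
  by rewrite !mxE sg_th mulNr.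
split=> [thi | /eqP thi].
  rewrite th0 in thi; have [k ->] := in_enum_val thi.
  have /matrixP/(_ k 0) := GT; rewrite subvecE => ->.
  by rewrite !mxE sg_th mulNr.
have iC : i \in ~: T by rewrite inE -th0 negbK.
by have [k ->] := in_enum_val iC; have := GC k; rewrite subvecE.
Qed.

Hypothesis Spd : posdef Sigma.

Let u := invmx (subM T T Sigma) *m vT.
Let w := subvec T theta0 - xi *: u.

Lemma lasso_KKT_sign th : sign th = v ->
  lasso_KKT Sigma theta0 xi th <->
  subvec T th = w /\ supnorm_le (subM (~: T) T Sigma *m u) 1.
Proof.
move=> Hs; have sthT : supp th \subset T by rewrite (supp_of_sign Hs).
have STT_unit := subM_unitmx T Spd.
rewrite lasso_KKT_signE // !subvec_lasso_grad //.
have wE : subvec T th = w <-> subvec T th - subvec T theta0 = - (xi *: u).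
  rewrite /w; split=> [-> | <-]; first by rewrite addrAC subrr add0r.
  by rewrite addrC subrK.
have uE : subM T T Sigma *m (- (xi *: u)) = - (xi *: vT).
  by rewrite mulmxN -scalemxAr mulKVmx.
rewrite wE; split=> [[GT GC] | [D GC]].
  have D : subvec T th - subvec T theta0 = - (xi *: u).
    by rewrite -uE in GT; exact: (can_inj (mulKmx STT_unit)).
  split=> //; move: GC; rewrite D mulmxN -scalemxAr supnorm_leN.
  by rewrite -[X in supnorm_le _ X]mulr1 supnorm_le_scale.
split; first by rewrite D.
by rewrite D mulmxN -scalemxAr supnorm_leN -[X in supnorm_le _ X]mulr1 supnorm_le_scale.
Qed.

End SignedSupport.

Theorem lemma3p3 (R : realFieldType) (p : nat)
  (Sigma : 'M[R]_p) (theta0 : 'cV[R]_p) (xi : R)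
  (thetahat : 'cV[R]_p) (T : {set 'I_p}) (v : 'cV[R]_p) :
  posdef Sigma ->
  0 < xi ->
  is_minimizer (lasso_obj Sigma theta0 xi) thetahat ->
  supp theta0 \subset T ->
  (forall i, v i 0 \in [:: 1; 0; -1]) ->
  supp v = T ->
  let STT := subM T T Sigma in
  let vT := subvec T v in
  let cond := supnorm_le (subM (~: T) T Sigma *m (invmx STT *m vT)) 1 /\
              vT = sign (subvec T theta0 - xi *: (invmx STT *m vT)) in
  (sign thetahat = v <-> cond) /\
  (cond -> subvec (~: T) thetahat = 0 /\
           subvec T thetahat = subvec T theta0 - xi *: (invmx STT *m vT)).
Proof.
move=> Spd xi0 Hmin sth0T _ svT STT vT cond.
set w := subvec T theta0 - _.
have KKT_sign := lasso_KKT_sign xi0 sth0T svT Spd.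
have sign_extvec : subvec T v = sign w -> sign (extvec w) = v.
  move=> vTE; apply/matrixP => i j; rewrite (ord1 j) mxE.
  have [iT|iT] := boolP (i \in T); last first.
    by rewrite extvec_out // sgr0 (notin_supp_eq0 _ iT) ?svT.
  have [k ->] := in_enum_val iT.
  by rewrite extvec_enum_val -subvecE vTE [RHS]mxE.
have thetahatE : cond -> thetahat = extvec w.
  move=> [Hn Hsg]; apply: (lasso_KKT_minimizer_eq Spd xi0) Hmin.
  by apply: (KKT_sign _ (sign_extvec Hsg)).2; rewrite subvec_extvec.
split; last by move=> C; rewrite thetahatE // subvecC_extvec subvec_extvec.
split=> [Hs | C]; last by rewrite thetahatE //; apply: sign_extvec; case: C.
have [Ew Hn] := (KKT_sign _ Hs).1 (lasso_minimizer_KKT Spd xi0 Hmin).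
by split=> //; rewrite -Ew -subvec_sign Hs.
Qed.
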